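(* Let $\mathcal{A}=\langle L,\mathcal{X},E\rangle$ be a timed automaton, $\ell_0,\ell\in L$, $\nu\in\mathbb{R}_{\ge0}^{\mathcal{X}}$ and $\gamma\subseteq\mathcal{X}$. Then $\mathcal{A}$ has a run from $\langle\ell_0,\mathbf{0}\rangle$ to $\langle\ell,\nu\rangle$ along which the set of clocks reset (i.e. the union of the reset sets $\lambda$ of the discrete transitions taken) is exactly $\gamma$ if and only if $R(\mathcal{A})$ has a run from the state $\langle\ell_0,\mathbf{0},\{\mathbf{0}\},\gamma\rangle$ to some state $\langle\ell,\upsilon,Z,\emptyset\rangle$ with $\upsilon\in\mathbb{N}^{\mathcal{X}}$ and $Z\in\mathcal{Z}_1(\mathcal{X})$ such that $\nu-\upsilon\in Z$.
   Context: Let $\mathcal{X}$ be a finite set of clocks. Clock constraints $\Phi(\mathcal{X})$ are generated by $\varphi ::= \mathbf{true}\mid x<k\mid x=k\mid x>k\mid \varphi\wedge\varphi$ with $k\in\mathbb{N}$, $x\in\mathcal{X}$. A clock valuation is a map $\nu:\mathcal{X}\to\mathbb{R}_{\ge0}$ (the same operations are used for maps $\mathcal{X}\to\mathbb{R}$); $\nu\models\varphi$ denotes satisfaction; $\mathbf{0}$ is the all-zero valuation; $(\nu+t)(x)=\nu(x)+t$ for $t\ge0$; for $\lambda\subseteq\mathcal{X}$, $\nu[\lambda\leftarrow0]$ sets clocks in $\lambda$ to $0$ and leaves others unchanged. A timed automaton is $\mathcal{A}=\langle L,\mathcal{X},E\rangle$ with finite location set $L$, finite clock set $\mathcal{X}$,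 and edges $E\subseteq L\times\Phi(\mathcal{X})\times2^{\mathcal{X}}\times L$. A configuration is a pair $\langle\ell,\nu\rangle$. Transitions: delay $\langle\ell,\nu\rangle\xrightarrow{d}\langle\ell,\nu+d\rangle$ for $d\ge0$; discrete $\langle\ell,\nu\rangle\xrightarrow{0}\langle\ell',\nu[\lambda\leftarrow0]\rangle$ whenever $\langle\ell,\varphi,\lambda,\ell'\rangle\in E$ and $\nu\models\varphi$. A run is a finite (possibly empty) sequence of consecutive transitions. A 1-bounded zone is a subset of $[0,1]^{\mathcal{X}}$ defined by a finite conjunction of constraints $x_i\bowtie c$ and $x_i-x_j\bowtie c$ with $c\in\{-1,0,1\}$ and $\bowtie\in\{<,\le,=,\ge,>\}$; $\mathcal{Z}_1(\mathcal{X})$ is the (finite) set of 1-bounded zones. For a set $Z$ of valuations, $Z[\lambda\leftarrow0]=\{\nu[\lambda\leftarrow0]:\nu\in Z\}$ and $\overrightarrow{Z}=\{\nu+t:\nu\in Z,t\ge0\}\cap[0,1]^{\mathcal{X}}$; $[\![x=1]\!]$ is the set of valuations with $x=1$; for $\upsilon\in\mathbb{N}^{\mathcal{X}}$, $\upsilon[x\leftarrow x+1]$ increments coordinate $x$ by one. The automaton $R(\mathcal{A})$ is the (infinite-state, nondeterministic, with $\varepsilon$-transitions) automaton over alphabet $\mathcal{X}$ with states $Q=L\times\mathbb{N}^{\mathcal{X}}\times\mathcal{Z}_1(\mathcal{X})\times2^{\mathcal{X}}$ and transitions: (1) delay: $\langle\ell,\upsilon,Z,\gamma\rangle\xrightarrow{\varepsilon}\langle\ell,\upsilon,\overrightarrow{Z},\gamma\rangle$;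 (2) wrapping, for each $x\in\mathcal{X}$: $\langle\ell,\upsilon,Z,\gamma\rangle\xrightarrow{\sigma}\langle\ell,\upsilon[x\leftarrow x+1],(Z\cap[\![x=1]\!])[x\leftarrow0],\gamma\rangle$, where $\sigma=\varepsilon$ if $x\in\gamma$ and $\sigma=x$ otherwise; (3) for each edge $\langle\ell,\varphi,\lambda,\ell'\rangle\in E$ and each $\gamma'$ with $\gamma'\cup\lambda=\gamma$: $\langle\ell,\upsilon,Z,\gamma\rangle\xrightarrow{\varepsilon}\langle\ell',\upsilon[\lambda\leftarrow0],\{\nu\in Z:\upsilon+\nu\models\varphi\}[\lambda\leftarrow0],\gamma'\rangle$. A run of $R(\mathcal{A})$ on word $w\in\mathcal{X}^*$ is a finite sequence of consecutive transitions whose concatenated labels equal $w$. *)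

From Stdlib Require Import Bool Reals List Classical ClassicalEpsilon.
Open Scope bool_scope.
Import ListNotations.
Open Scope R_scope.
Set Implicit Arguments.

Definition finite_type (T : Type) : Prop := exists l : list T, forall x : T, In x l.

Inductive guard (X : Type) : Type :=
| GTrue : guard X
| GLt : X -> nat -> guard X
| GEq : X -> nat -> guard X
| GGt : X -> nat -> guard X
| GAnd : guard X -> guard X -> guard X.
Arguments GTrue {X}.

Fixpoint gsat {X : Type} (v : X -> R) (g : guard X) : Prop :=
  match g with
  | GTrue => True
  | GLt x k => v x < INR k
  | GEq x k => v x = INR k
  | GGt x k => v x > INR k
  | GAnd g1 g2 => gsat v g1 /\ gsat v g2
  end.

Definition clockset (X : Type) := X -> bool.

(** Timed automaton <L, X, E>: L and X are the carrier types (finiteness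
    is assumed separately), E is a finite list of edges (l, phi, lambda, l'). *)
Record TA (L X : Type) := mkTA { edges : list (L * guard X * clockset X * L) }.

Definition val0 {X : Type} : X -> R := fun _ => 0.
Definition vdelay {X : Type} (v : X -> R) (t : R) : X -> R := fun x => v x + t.
Definition vreset {X : Type} (v : X -> R) (lam : clockset X) : X -> R :=
  fun x => if lam x then 0 else v x.

Inductive ta_step {L X : Type} (A : TA L X) :
    (L * (X -> R)) -> option (clockset X) -> (L * (X -> R)) -> Prop :=
| ta_delay : forall l v d, 0 <= d -> ta_step A (l, v) None (l, vdelay v d)
| ta_discrete : forall l phi lam l' v,
    In (l, phi, lam, l') (edges A) -> gsat v phi ->
    ta_step A (l, v) (Some lam) (l', vreset v lam).

(** Runs (finite, possibly empty), indexed by the union of the reset sets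
    of the discrete transitions taken. *)
Inductive ta_run {L X : Type} (A : TA L X) :
    (L * (X -> R)) -> (L * (X -> R)) -> clockset X -> Prop :=
| ta_run_nil : forall c, ta_run A c c (fun _ => false)
| ta_run_cons : forall c1 c2 c3 lab rs,
    ta_step A c1 lab c2 -> ta_run A c2 c3 rs ->
    ta_run A c1 c3 (fun x => match lab with
                             | None => rs x
                             | Some lam => lam x || rs x end).

Inductive cmp := CLt | CLe | CEq | CGe | CGt.
Inductive cst := Cm1 | C0 | C1.
Definition cst_val (c : cst) : R := match c with Cm1 => -1 | C0 => 0 | C1 => 1 end.
Definition cmp_sat (o : cmp) (a b : R) : Prop :=
  match o with CLt => a < b | CLe => a <= b | CEq => a = b | CGe => a >= b | CGt => a > b end.

Inductive zconstr (X : Type) : Type :=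
| ZBound : X -> cmp -> cst -> zconstr X
| ZDiff : X -> X -> cmp -> cst -> zconstr X.

Definition zsat {X : Type} (v : X -> R) (k : zconstr X) : Prop :=
  match k with
  | ZBound x o c => cmp_sat o (v x) (cst_val c)
  | ZDiff x y o c => cmp_sat o (v x - v y) (cst_val c)
  end.

Definition in_unit_cube {X : Type} (v : X -> R) : Prop := forall x, 0 <= v x <= 1.

Definition zone1 {X : Type} (Z : (X -> R) -> Prop) : Prop :=
  exists cs : list (zconstr X),
    forall v, Z v <-> (in_unit_cube v /\ Forall (zsat v) cs).

Definition zreset {X : Type} (Z : (X -> R) -> Prop) (lam : clockset X) : (X -> R) -> Prop :=
  fun v => exists v0, Z v0 /\ v = vreset v0 lam.
Definition zfuture {X : Type} (Z : (X -> R) -> Prop) : (X -> R) -> Prop :=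
  fun v => (exists v0 t, Z v0 /\ 0 <= t /\ v = vdelay v0 t) /\ in_unit_cube v.

Definition single {X : Type} (x : X) : clockset X :=
  fun y => if excluded_middle_informative (y = x) then true else false.
Definition incr {X : Type} (u : X -> nat) (x : X) : X -> nat :=
  fun y => if excluded_middle_informative (y = x) then S (u y) else u y.
Definition nreset {X : Type} (u : X -> nat) (lam : clockset X) : X -> nat :=
  fun y => if lam y then 0%nat else u y.
Definition vplus {X : Type} (u : X -> nat) (v : X -> R) : X -> R :=
  fun x => INR (u x) + v x.

Record rstate (L X : Type) := mkR {
  rloc : L; rint : X -> nat; rzone : (X -> R) -> Prop; rgam : clockset X }.
Arguments mkR {L X}.

(** Transitions of R(A); the label None is epsilon.  Target states must lie
    in Q = L x N^X x Z_1(X) x 2^X. *)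
Inductive rstep {L X : Type} (A : TA L X) : rstate L X -> option X -> rstate L X -> Prop :=
| r_delay : forall l u Z g,
    zone1 (zfuture Z) ->
    rstep A (mkR l u Z g) None (mkR l u (zfuture Z) g)
| r_wrap : forall l u Z g x,
    zone1 (zreset (fun v => Z v /\ v x = 1) (single x)) ->
    rstep A (mkR l u Z g) (if g x then None else Some x)
          (mkR l (incr u x) (zreset (fun v => Z v /\ v x = 1) (single x)) g)
| r_edge : forall l u Z g phi lam l' g',
    In (l, phi, lam, l') (edges A) ->
    (forall x, g x = g' x || lam x) ->
    zone1 (zreset (fun v => Z v /\ gsat (vplus u v) phi) lam) ->
    rstep A (mkR l u Z g) None
          (mkR l' (nreset u lam) (zreset (fun v => Z v /\ gsat (vplus u v) phi) lam) g').

Inductive rrun {L X : Type} (A : TA L X) : rstate L X -> list X -> rstate L X -> Prop :=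
| rrun_nil : forall q, rrun A q [] q
| rrun_cons : forall q1 a q2 w q3,
    rstep A q1 a q2 -> rrun A q2 w q3 ->
    rrun A q1 (match a with None => w | Some x => x :: w end) q3.

(** A valuation [nu] is represented in R(A) by integral parts [u] and the
    point [frac u nu = nu - u] of the current zone; the operations of R(A)
    commute with [vplus u v = u + v].
    - Backward ([run_backward]): each transition of R(A) is realised by a
      run of A (a delay by the same delay, a wrap by the empty run, an edge
      by the same edge), so runs of R(A) map to runs of A.
    - Forward ([run_forward]): an edge of A is matched by the same edge of
      R(A); a delay of A by alternating delays of R(A), up to the moment the
      largest fractional part reaches 1, with wraps of that clock; this ends
      because each wrap raises an integral part below a fixed bound.
    The side condition that all zones built are 1-bounded zones is handled
    first: sets defined by difference constraints [x - y < c], [x - y <= c]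
    (with a zero clock) are closed under intersection, reset and time elapse,
    by Fourier-Motzkin elimination; and a nonempty such set inside the unit
    cube is a 1-bounded zone, because there constraints with [|c| >= 2] are
    trivial. *)

From Pilot Require Import Defs.
From Stdlib Require Import Reals List Lra Lia ZArith Bool.
From Stdlib Require Import FunctionalExtensionality Classical ClassicalEpsilon.
Import ListNotations.
Open Scope R_scope.

(** A difference constraint [(a, b, strict, c)] on [f : N -> R] states
    [f a - f b < c] if [strict], and [f a - f b <= c] otherwise. *)
Definition dc (N : Type) := (N * N * bool * Z)%type.

Section FourierMotzkin.
Context {N : Type}.

Definition eqc (a b : N) : bool :=
  if excluded_middle_informative (a = b) then true else false.

Lemma eqc_eq (a b : N) : a = b -> eqc a b = true.
Proof. intros; unfold eqc; destruct excluded_middle_informative; congruence. Qed.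

Lemma eqc_neq (a b : N) : a <> b -> eqc a b = false.
Proof. intros; unfold eqc; destruct excluded_middle_informative; congruence. Qed.

Definition dc_sat (f : N -> R) (k : dc N) : Prop :=
  match k with
  | (a, b, s, c) => if s then f a - f b < IZR c else f a - f b <= IZR c
  end.

Definition upd (f : N -> R) (z : N) (r : R) : N -> R :=
  fun n => if excluded_middle_informative (n = z) then r else f n.

Definition is_upper (z : N) (k : dc N) : bool :=
  match k with (a, b, _, _) => eqc a z && negb (eqc b z) end.
Definition is_lower (z : N) (k : dc N) : bool :=
  match k with (a, b, _, _) => negb (eqc a z) && eqc b z end.
Definition is_indep (z : N) (k : dc N) : bool :=
  match k with (a, b, _, _) => Bool.eqb (eqc a z) (eqc b z) end.

(** Adding [z - b < c1] and [a - z < c2] yields [a - b < c1 + c2]. *)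
Definition dc_combine (up lo : dc N) : dc N :=
  match up, lo with (_, b, s1, c1), (a, _, s2, c2) => (a, b, s1 || s2, (c1 + c2)%Z) end.

Definition fm_elim (z : N) (cs : list (dc N)) : list (dc N) :=
  filter (is_indep z) cs ++
  flat_map (fun lo => map (fun up => dc_combine up lo) (filter (is_upper z) cs))
           (filter (is_lower z) cs).

Lemma dc_sat_indep (z : N) (f : N -> R) (r : R) (k : dc N) :
  is_indep z k = true -> (dc_sat (upd f z r) k <-> dc_sat f k).
Proof.
  destruct k as [[[a b] s] c]; simpl; unfold upd.
  destruct (excluded_middle_informative (a = z)), (excluded_middle_informative (b = z));
    try rewrite (eqc_eq _ _ e); try rewrite (eqc_eq _ _ e0);
    try rewrite (eqc_neq _ _ n); try rewrite (eqc_neq _ _ n0); simpl; intros H;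
    try discriminate.
  - subst. replace (r - r) with (f z - f z) by ring. tauto.
  - tauto.
Qed.

Lemma fm_elim_sound (z : N) (cs : list (dc N)) (f : N -> R) (r : R) :
  Forall (dc_sat (upd f z r)) cs -> Forall (dc_sat f) (fm_elim z cs).
Proof.
  rewrite !Forall_forall. intros Hr k Hk. unfold fm_elim in Hk.
  apply in_app_iff in Hk as [Hk|Hk].
  - apply filter_In in Hk as [Hk Hi]. apply (dc_sat_indep z f r k Hi). auto.
  - apply in_flat_map in Hk as [lo [Hlo Hk]]. apply in_map_iff in Hk as [up [<- Hup]].
    apply filter_In in Hlo as [Hlo Hlo'], Hup as [Hup Hup'].
    pose proof (Hr _ Hlo) as Hsat_lo. pose proof (Hr _ Hup) as Hsat_up.
    destruct lo as [[[a1 b1] s1] c1], up as [[[a2 b2] s2] c2]; simpl in *.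
    unfold upd in *.
    destruct (excluded_middle_informative (a1 = z)) as [e|n];
      [rewrite (eqc_eq _ _ e) in Hlo'; discriminate|].
    destruct (excluded_middle_informative (b1 = z)) as [e1|n1];
      [|rewrite (eqc_neq _ _ n1), andb_false_r in Hlo'; discriminate].
    destruct (excluded_middle_informative (a2 = z)) as [e2|n2];
      [|rewrite (eqc_neq _ _ n2) in Hup'; discriminate].
    destruct (excluded_middle_informative (b2 = z)) as [e3|n3];
      [rewrite (eqc_eq _ _ e3), andb_false_r in Hup'; discriminate|].
    rewrite plus_IZR. destruct s1, s2; simpl; lra.
Qed.

Definition lower_ok (l : R * bool) (r : R) : Prop := if snd l then fst l < r else fst l <= r.
Definition upper_ok (u : R * bool) (r : R) : Prop := if snd u then r < fst u else r <= fst u.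

Lemma strongest_in_list {T U : Type} (P : T -> U -> Prop) :
  (forall a b, (forall r, P a r -> P b r) \/ (forall r, P b r -> P a r)) ->
  forall (a0 : T) (ls : list T), exists m, In m (a0 :: ls) /\
    forall r, P m r -> forall a, In a (a0 :: ls) -> P a r.
Proof.
  intros Htot a0 ls; revert a0; induction ls as [|a1 ls IH]; intros a0.
  - exists a0; split; [left; auto|]. intros r H a [<-|[]]; auto.
  - destruct (IH a1) as [m [Hm Hmax]]. destruct (Htot a0 m) as [H0m|Hm0].
    + exists a0; split; [left; auto|]. intros r Hr a [<-|Ha]; auto.
    + exists m; split; [right; auto|]. intros r Hr a [<-|Ha]; auto.
Qed.

Lemma lower_ok_total (a b : R * bool) :
  (forall r, lower_ok a r -> lower_ok b r) \/ (forall r, lower_ok b r -> lower_ok a r).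
Proof.
  destruct a as [x s], b as [y t]; unfold lower_ok; simpl.
  destruct (total_order_T x y) as [[H|H]|H]; destruct s, t;
    first [left; intros r Hr; lra | right; intros r Hr; lra].
Qed.

Lemma upper_ok_total (a b : R * bool) :
  (forall r, upper_ok a r -> upper_ok b r) \/ (forall r, upper_ok b r -> upper_ok a r).
Proof.
  destruct a as [x s], b as [y t]; unfold upper_ok; simpl.
  destruct (total_order_T x y) as [[H|H]|H]; destruct s, t;
    first [left; intros r Hr; lra | right; intros r Hr; lra].
Qed.

(** Finitely many lower and upper bounds, pairwise compatible, have a
    common solution: take one between the strongest lower and upper bound. *)
Lemma compatible_bounds (lows ups : list (R * bool)) :
  (forall l u, In l lows -> In u ups ->
     if snd l || snd u then fst l < fst u else fst l <= fst u) ->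
  exists r, (forall l, In l lows -> lower_ok l r) /\ (forall u, In u ups -> upper_ok u r).
Proof.
  intros H.
  destruct lows as [|l0 ls], ups as [|u0 us].
  - exists 0; split; intros ? [].
  - destruct (strongest_in_list _ upper_ok_total u0 us) as [m [_ Hm]].
    exists (fst m - 1); split; [intros ? []|].
    apply Hm. unfold upper_ok; destruct (snd m); lra.
  - destruct (strongest_in_list _ lower_ok_total l0 ls) as [m [_ Hm]].
    exists (fst m + 1); split; [|intros ? []].
    apply Hm. unfold lower_ok; destruct (snd m); lra.
  - destruct (strongest_in_list _ upper_ok_total u0 us) as [mu [Hmu Hu]].
    destruct (strongest_in_list _ lower_ok_total l0 ls) as [ml [Hml Hl]].
    specialize (H ml mu Hml Hmu).
    destruct ml as [xl sl], mu as [xu su]; simpl in H.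
    destruct (sl || su) eqn:E.
    + exists ((xl + xu) / 2); split; [apply Hl|apply Hu];
        unfold lower_ok, upper_ok; simpl; destruct sl, su; lra.
    + apply orb_false_iff in E as [-> ->].
      exists xl; split; [apply Hl|apply Hu]; unfold lower_ok, upper_ok; simpl; lra.
Qed.

Lemma fm_elim_complete (z : N) (cs : list (dc N)) (f : N -> R) :
  Forall (dc_sat f) (fm_elim z cs) -> exists r, Forall (dc_sat (upd f z r)) cs.
Proof.
  rewrite Forall_forall. unfold fm_elim. intros H.
  set (lows := map (fun k : dc N => match k with (a, _, s, c) => (f a - IZR c, s) end)
                   (filter (is_lower z) cs)).
  set (ups := map (fun k : dc N => match k with (_, b, s, c) => (f b + IZR c, s) end)
                  (filter (is_upper z) cs)).
  destruct (compatible_bounds lows ups) as [r [Hl Hu]].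
  { intros lw up Hlw Hup. unfold lows, ups in *.
    apply in_map_iff in Hlw as [lo [<- Hlo]]. apply in_map_iff in Hup as [upk [<- Hupk]].
    assert (Hc : dc_sat f (dc_combine upk lo)).
    { apply H, in_app_iff; right. apply in_flat_map. exists lo; split; auto.
      apply in_map_iff; exists upk; split; auto. }
    destruct lo as [[[a1 b1] s1] c1], upk as [[[a2 b2] s2] c2]; simpl in *.
    rewrite plus_IZR in Hc. destruct s1, s2; simpl in *; lra. }
  exists r. rewrite Forall_forall. intros k Hk.
  destruct k as [[[a b] s] c] eqn:Ek.
  destruct (excluded_middle_informative (a = z)) as [e|n],
           (excluded_middle_informative (b = z)) as [e1|n1].
  - apply (dc_sat_indep z). simpl; rewrite (eqc_eq _ _ e), (eqc_eq _ _ e1); auto.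
    apply H, in_app_iff; left; apply filter_In; split; auto.
    simpl; rewrite (eqc_eq _ _ e), (eqc_eq _ _ e1); auto.
  - assert (Hin : In (f b + IZR c, s) ups).
    { apply in_map_iff. exists (a, b, s, c); split; auto.
      apply filter_In; split; auto. simpl; rewrite (eqc_eq _ _ e), (eqc_neq _ _ n1); auto. }
    specialize (Hu _ Hin). unfold upper_ok in Hu; simpl in *. unfold upd.
    destruct (excluded_middle_informative (a = z)); [|congruence].
    destruct (excluded_middle_informative (b = z)); [congruence|].
    destruct s; lra.
  - assert (Hin : In (f a - IZR c, s) lows).
    { apply in_map_iff. exists (a, b, s, c); split; auto.
      apply filter_In; split; auto. simpl; rewrite (eqc_neq _ _ n), (eqc_eq _ _ e1); auto. }
    specialize (Hl _ Hin). unfold lower_ok in Hl; simpl in *. unfold upd.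
    destruct (excluded_middle_informative (a = z)); [congruence|].
    destruct (excluded_middle_informative (b = z)); [|congruence].
    destruct s; lra.
  - apply (dc_sat_indep z). simpl; rewrite (eqc_neq _ _ n), (eqc_neq _ _ n1); auto.
    apply H, in_app_iff; left; apply filter_In; split; auto.
    simpl; rewrite (eqc_neq _ _ n), (eqc_neq _ _ n1); auto.
Qed.

Lemma fm_elim_spec (z : N) (cs : list (dc N)) (f : N -> R) :
  (exists r, Forall (dc_sat (upd f z r)) cs) <-> Forall (dc_sat f) (fm_elim z cs).
Proof.
  split; [intros [r Hr]; exact (fm_elim_sound z cs f r Hr)|apply fm_elim_complete].
Qed.

End FourierMotzkin.

Lemma Forall_equiv {T : Type} (P Q : T -> Prop) (l : list T) :
  (forall k, P k <-> Q k) -> (Forall P l <-> Forall Q l).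
Proof. intros H; rewrite !Forall_forall; split; intros H1 k Hk; apply H; auto. Qed.

Section DifferenceConstraintSets.
Context {X : Type}.

(** Valuations are extended with a zero clock [None], so that bounds
    [x < c] become differences [x - 0 < c]. *)
Definition with_zero (v : X -> R) : option X -> R :=
  fun o => match o with None => 0 | Some x => v x end.

Definition dc_definable (Z : (X -> R) -> Prop) : Prop :=
  exists cs : list (dc (option X)), forall v, Z v <-> Forall (dc_sat (with_zero v)) cs.

Lemma dc_definable_ext (Z Z' : (X -> R) -> Prop) :
  dc_definable Z -> (forall v, Z' v <-> Z v) -> dc_definable Z'.
Proof. intros [cs H] H'; exists cs; intros v; rewrite H'; auto. Qed.

Lemma dc_definable_and (Z1 Z2 : (X -> R) -> Prop) :
  dc_definable Z1 -> dc_definable Z2 -> dc_definable (fun v => Z1 v /\ Z2 v).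
Proof.
  intros [c1 H1] [c2 H2]; exists (c1 ++ c2); intros v.
  rewrite Forall_app, H1, H2; tauto.
Qed.

Lemma dc_definable_forall (lx : list X) (Hlx : forall x, In x lx)
    (P : X -> (X -> R) -> Prop) (ks : X -> list (dc (option X))) :
  (forall x v, P x v <-> Forall (dc_sat (with_zero v)) (ks x)) ->
  dc_definable (fun v => forall x, P x v).
Proof.
  intros H; exists (flat_map ks lx); intros v.
  rewrite Forall_flat_map, Forall_forall. split.
  - intros Hv x _. apply H, Hv.
  - intros Hv x. apply H, Hv, Hlx.
Qed.

Lemma dc_definable_unit_cube (lx : list X) (Hlx : forall x, In x lx) :
  dc_definable in_unit_cube.
Proof.
  apply (dc_definable_forall lx Hlx (fun x v => 0 <= v x <= 1)
    (fun x => [(None, Some x, false, 0%Z); (Some x, None, false, 1%Z)])).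
  intros x v. rewrite !Forall_cons_iff. simpl.
  split; [intros; repeat split; try lra; constructor|intros [H1 [H2 _]]; lra].
Qed.

Lemma dc_definable_clock_eq (x : X) (c : Z) : dc_definable (fun v => v x = IZR c).
Proof.
  exists [(Some x, None, false, c); (None, Some x, false, (- c)%Z)].
  intros v. rewrite !Forall_cons_iff. simpl. rewrite opp_IZR.
  split; [intros; repeat split; try lra; constructor|intros [H1 [H2 _]]; lra].
Qed.

Lemma dc_definable_zero_on (lx : list X) (Hlx : forall x, In x lx) (lam : clockset X) :
  dc_definable (fun v => forall x, lam x = true -> v x = 0).
Proof.
  apply (dc_definable_forall lx Hlx (fun x v => lam x = true -> v x = 0)
    (fun x => if lam x then [(Some x, None, false, 0%Z); (None, Some x, false, 0%Z)] else [])).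
  intros x v. destruct (lam x).
  - rewrite !Forall_cons_iff. simpl.
    split; [intros H; specialize (H eq_refl); repeat split; try lra; constructor|].
    intros [H1 [H2 _]] _; lra.
  - split; [constructor|discriminate].
Qed.

Fixpoint guard_dcs (u : X -> nat) (phi : guard X) : list (dc (option X)) :=
  match phi with
  | GTrue => []
  | GLt x k => [(Some x, None, true, (Z.of_nat k - Z.of_nat (u x))%Z)]
  | GEq x k => [(Some x, None, false, (Z.of_nat k - Z.of_nat (u x))%Z);
                (None, Some x, false, (Z.of_nat (u x) - Z.of_nat k)%Z)]
  | GGt x k => [(None, Some x, true, (Z.of_nat (u x) - Z.of_nat k)%Z)]
  | GAnd g1 g2 => guard_dcs u g1 ++ guard_dcs u g2
  end.

Lemma dc_definable_guard (u : X -> nat) (phi : guard X) :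
  dc_definable (fun v => gsat (vplus u v) phi).
Proof.
  exists (guard_dcs u phi). intros v. induction phi; simpl; unfold vplus;
    rewrite ?Forall_cons_iff; simpl; rewrite ?minus_IZR, <- ?INR_IZR_INZ.
  - split; auto.
  - split; [intros; split; [lra|constructor]|intros [H _]; lra].
  - split; [intros; repeat split; try constructor; lra|intros [H1 [H2 _]]; lra].
  - split; [intros; split; [lra|constructor]|intros [H _]; lra].
  - rewrite Forall_app. tauto.
Qed.

Lemma with_zero_upd (v : X -> R) (x : X) (r : R) :
  with_zero (upd v x r) = upd (with_zero v) (Some x) r.
Proof.
  apply functional_extensionality; intros [y|]; unfold with_zero, upd.
  - destruct (excluded_middle_informative (y = x)),
             (excluded_middle_informative (Some y = Some x)); congruence.
  - destruct (excluded_middle_informative (None = Some x)); congruence.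
Qed.

Lemma dc_definable_exists (x : X) (Z : (X -> R) -> Prop) :
  dc_definable Z -> dc_definable (fun v => exists r, Z (upd v x r)).
Proof.
  intros [cs H]. exists (fm_elim (Some x) cs). intros v. rewrite <- fm_elim_spec.
  split; intros [r Hr]; exists r; [rewrite <- with_zero_upd; apply H; auto|].
  apply H; rewrite with_zero_upd; auto.
Qed.

Definition free_on (Z : (X -> R) -> Prop) (S : list X) (v : X -> R) : Prop :=
  exists w, (forall x, ~ In x S -> w x = v x) /\ Z w.

Lemma dc_definable_free_on (Z : (X -> R) -> Prop) (S : list X) :
  dc_definable Z -> dc_definable (free_on Z S).
Proof.
  intros HZ. induction S as [|x S IH].
  - apply (dc_definable_ext _ _ HZ). intros v; split.
    + intros [w [Hw Zw]]. replace v with w; auto.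
      apply functional_extensionality; intros y; apply Hw; auto.
    + intros Zv; exists v; split; auto.
  - apply (dc_definable_ext _ _ (dc_definable_exists x _ IH)). intros v; split.
    + intros [w [Hw Zw]]. exists (w x), w; split; auto.
      intros y Hy. unfold upd. destruct (excluded_middle_informative (y = x)); [congruence|].
      apply Hw. intros [E|E]; auto.
    + intros [r [w [Hw Zw]]]. exists w; split; auto.
      intros y Hy. rewrite Hw by (intros E; apply Hy; right; auto).
      unfold upd. destruct (excluded_middle_informative (y = x)); auto.
      exfalso; apply Hy; left; auto.
Qed.

(** Reset: the clocks of [lam] are freed and then constrained to [0]. *)
Lemma dc_definable_reset (lx : list X) (Hlx : forall x, In x lx)
    (Z : (X -> R) -> Prop) (lam : clockset X) :
  dc_definable Z -> dc_definable (zreset Z lam).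
Proof.
  intros HZ.
  apply (dc_definable_ext _ _ (dc_definable_and _ _ (dc_definable_zero_on lx Hlx lam)
                                  (dc_definable_free_on Z (filter lam lx) HZ))).
  intros v; split.
  - intros [v0 [Z0 ->]]. split.
    + intros x Hx; unfold vreset; rewrite Hx; auto.
    + exists v0; split; auto. intros x Hx. unfold vreset.
      destruct (lam x) eqn:E; auto. exfalso; apply Hx, filter_In; auto.
  - intros [H0 [w [Hw Zw]]]. exists w; split; auto.
    apply functional_extensionality; intros x. unfold vreset.
    destruct (lam x) eqn:E; auto. symmetry; apply Hw. intros Hin.
    apply filter_In in Hin as [_ E']; congruence.
Qed.

(** Time elapse: the elapsed time is an extra variable [Some None], with
    [t >= 0], that is projected out. *)
Lemma dc_definable_elapse (Z : (X -> R) -> Prop) :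
  dc_definable Z -> dc_definable (fun v => exists t, 0 <= t /\ Z (fun x => v x - t)).
Proof.
  intros [cs H].
  set (lift := fun k : dc (option X) => match k with (a, b, s, c) => (Some a, Some b, s, c) end).
  set (flat := fun n : option (option X) => match n with None => None | Some o => o end).
  set (back := fun k : dc (option (option X)) =>
                 match k with (a, b, s, c) => (flat a, flat b, s, c) end).
  exists (map back (fm_elim (Some None) ((None, Some None, false, 0%Z) :: map lift cs))).
  intros v. rewrite Forall_map.
  set (G := fun n => with_zero v (flat n)).
  rewrite (Forall_equiv _ (dc_sat G)); [|intros [[[a b] s] c]; simpl; tauto].
  rewrite <- fm_elim_spec.
  assert (Hv : forall t o, upd G (Some None) t (Some o) = with_zero (fun x => v x - t) o + t).
  { intros t [y|]; unfold upd, G; simpl.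
    - destruct (excluded_middle_informative (Some (Some y) = Some None)); [discriminate|].
      simpl; ring.
    - destruct (excluded_middle_informative (Some (@None X) = Some None)); [ring|congruence]. }
  assert (H0 : forall t, upd G (Some None) t None = 0).
  { intros t; unfold upd, G.
    destruct (excluded_middle_informative (@None (option X) = Some None));
      [discriminate|reflexivity]. }
  assert (Hshift : forall t, Forall (dc_sat (fun x => upd G (Some None) t x)) (map lift cs)
                         <-> Z (fun x => v x - t)).
  { intros t. rewrite H, Forall_map. apply Forall_equiv.
    intros [[[a b] s] c]; simpl. rewrite !Hv.
    replace (with_zero (fun x => v x - t) a + t - (with_zero (fun x => v x - t) b + t))
      with (with_zero (fun x => v x - t) a - with_zero (fun x => v x - t) b) by ring.
    tauto. }
  split.
  - intros [t [Ht HZ]]. exists t. constructor.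
    + simpl. rewrite H0, Hv. simpl. lra.
    + apply Hshift; auto.
  - intros [t Ht]. apply Forall_cons_iff in Ht as [Hk0 Hcs]. exists t. split.
    + simpl in Hk0. rewrite H0, Hv in Hk0. simpl in Hk0. lra.
    + apply Hshift; auto.
Qed.

End DifferenceConstraintSets.

Section UnitZones.
Context {X : Type} (lx : list X) (Hlx : forall x : X, In x lx).

Definition unit_zone (Z : (X -> R) -> Prop) : Prop :=
  dc_definable Z /\ forall v, Z v -> in_unit_cube v.

Lemma unit_zone_zero : unit_zone (fun v => forall x, v x = 0).
Proof.
  split.
  - apply (dc_definable_ext _ _ (dc_definable_zero_on lx Hlx (fun _ => true))).
    intros v; split; auto.
  - intros v H x; rewrite H; lra.
Qed.

Lemma unit_zone_inter (Z P : (X -> R) -> Prop) :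
  unit_zone Z -> dc_definable P -> unit_zone (fun v => Z v /\ P v).
Proof. intros [HD HC] HP; split; [apply dc_definable_and; auto|intros v [H _]; auto]. Qed.

Lemma unit_zone_reset (Z : (X -> R) -> Prop) (lam : clockset X) :
  unit_zone Z -> unit_zone (zreset Z lam).
Proof.
  intros [HD HC]. split; [apply (dc_definable_reset lx Hlx); auto|].
  intros v [v0 [Z0 ->]] x. unfold vreset. destruct (lam x); [lra|apply HC; auto].
Qed.

Lemma unit_zone_future (Z : (X -> R) -> Prop) : unit_zone Z -> unit_zone (zfuture Z).
Proof.
  intros [HD _]. split; [|intros v [_ H]; auto].
  apply (dc_definable_ext _ _ (dc_definable_and _ _ (dc_definable_elapse _ HD)
                                  (dc_definable_unit_cube lx Hlx))).
  intros v; split.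
  - intros [[v0 [t [Z0 [Ht ->]]]] Hc]. split; auto. exists t; split; auto.
    replace (fun x => vdelay v0 t x - t) with v0; auto.
    apply functional_extensionality; intros x; unfold vdelay; ring.
  - intros [[t [Ht HZ]] Hc]. split; auto. exists (fun x => v x - t), t; repeat split; auto.
    apply functional_extensionality; intros x; unfold vdelay; ring.
Qed.

Definition small_cst (c : Z) : option cst :=
  if Z.eqb c 0 then Some C0 else if Z.eqb c 1 then Some Defs.C1 else
  if Z.eqb c (-1) then Some Cm1 else None.

Definition cst_neg (c : cst) : cst := match c with Cm1 => Defs.C1 | C0 => C0 | Defs.C1 => Cm1 end.

Definition dc_to_zconstr (k : dc (option X)) : list (zconstr X) :=
  match k with (a, b, s, c) =>
    match small_cst c with
    | None => []
    | Some cc =>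
      match a, b with
      | Some x, Some y => [ZDiff x y (if s then CLt else CLe) cc]
      | Some x, None => [ZBound x (if s then CLt else CLe) cc]
      | None, Some y => [ZBound y (if s then CGt else CGe) (cst_neg cc)]
      | None, None => []
      end
    end
  end.

Lemma small_cst_some (c : Z) (cc : cst) : small_cst c = Some cc -> IZR c = cst_val cc.
Proof.
  unfold small_cst. destruct (Z.eqb_spec c 0); [intros H; inversion H; subst; reflexivity|].
  destruct (Z.eqb_spec c 1); [intros H; inversion H; subst; reflexivity|].
  destruct (Z.eqb_spec c (-1)); [intros H; inversion H; subst; reflexivity|]. discriminate.
Qed.

Lemma small_cst_none (c : Z) : small_cst c = None -> IZR c >= 2 \/ IZR c <= -2.
Proof.
  unfold small_cst. destruct (Z.eqb_spec c 0); [discriminate|].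
  destruct (Z.eqb_spec c 1); [discriminate|].
  destruct (Z.eqb_spec c (-1)); [discriminate|]. intros _.
  destruct (Z_le_gt_dec 2 c).
  - left. apply Rle_ge, (IZR_le 2 c); auto.
  - right. apply (IZR_le c (-2)). lia.
Qed.

Lemma with_zero_unit (v : X -> R) (o : option X) : in_unit_cube v -> 0 <= with_zero v o <= 1.
Proof. intros H; destruct o; simpl; [apply H|lra]. Qed.

(** In the unit cube, a constraint satisfied by some point [v0] of the cube
    is equivalent to its translation: differences lie in [[-1, 1]], so a
    dropped constraint (constant [>= 2] or [<= -2]) holds on the whole cube. *)
Lemma dc_to_zconstr_correct (v v0 : X -> R) (k : dc (option X)) :
  in_unit_cube v -> in_unit_cube v0 -> dc_sat (with_zero v0) k ->
  (dc_sat (with_zero v) k <-> Forall (zsat v) (dc_to_zconstr k)).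
Proof.
  intros Hv Hv0 Hk. destruct k as [[[a b] s] c]. unfold dc_to_zconstr.
  destruct (small_cst c) as [cc|] eqn:E.
  - apply small_cst_some in E.
    assert (Hn : cst_val (cst_neg cc) = - cst_val cc) by (destruct cc; simpl; lra).
    destruct a as [x|], b as [y|]; simpl in *; rewrite ?Forall_cons_iff; simpl;
      rewrite E in *; destruct s; simpl; try rewrite Hn.
    all: first [ split; [intros; split; [lra|constructor]|intros [? ?]; lra]
               | split; [intros; constructor|intros; lra] ].
  - apply small_cst_none in E. split; [constructor|intros _].
    pose proof (with_zero_unit v a Hv); pose proof (with_zero_unit v b Hv);
    pose proof (with_zero_unit v0 a Hv0); pose proof (with_zero_unit v0 b Hv0).
    simpl in *; destruct s; lra.
Qed.

Lemma unit_zone_zone1 (Z : (X -> R) -> Prop) : unit_zone Z -> (exists v0, Z v0) -> zone1 Z.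
Proof.
  intros [[cs HD] HC] [v0 Z0].
  exists (flat_map dc_to_zconstr cs). intros v.
  assert (Hk : Forall (dc_sat (with_zero v0)) cs) by (apply HD; auto).
  assert (Key : in_unit_cube v ->
                (Forall (dc_sat (with_zero v)) cs <-> Forall (zsat v) (flat_map dc_to_zconstr cs))).
  { intros Hv. rewrite Forall_flat_map. rewrite Forall_forall in Hk.
    split; intros H; rewrite Forall_forall in H |- *; intros k Hin;
      apply (dc_to_zconstr_correct v v0 k Hv (HC v0 Z0) (Hk k Hin)), H, Hin. }
  split.
  - intros Zv. pose proof (HC v Zv). split; auto. apply Key; auto. apply HD; auto.
  - intros [Hv Hz]. apply HD, Key; auto.
Qed.

End UnitZones.

Section Simulation.
Context {L X : Type} (lx : list X) (Hlx : forall x : X, In x lx) (A : TA L X).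

(** The fractional representative of [nu] relative to integral parts [u]:
    a valuation [nu] is represented in R(A) by [u] together with a zone
    containing [frac u nu]. *)
Definition frac (u : X -> nat) (nu : X -> R) : X -> R := fun x => nu x - INR (u x).

Lemma vplus_frac (u : X -> nat) (nu : X -> R) : vplus u (frac u nu) = nu.
Proof. apply functional_extensionality; intros x; unfold vplus, frac; ring. Qed.

Lemma frac_vdelay (u : X -> nat) (nu : X -> R) (t : R) :
  frac u (vdelay nu t) = vdelay (frac u nu) t.
Proof. apply functional_extensionality; intros x; unfold frac, vdelay; ring. Qed.

Lemma vplus_vdelay (u : X -> nat) (v : X -> R) (t : R) :
  vplus u (vdelay v t) = vdelay (vplus u v) t.
Proof. apply functional_extensionality; intros x; unfold vplus, vdelay; ring. Qed.

Lemma vplus_wrap (u : X -> nat) (v : X -> R) (x : X) :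
  v x = 1 -> vplus (incr u x) (vreset v (single x)) = vplus u v.
Proof.
  intros Hx. apply functional_extensionality; intros y; unfold vplus, vreset, single, incr.
  destruct (excluded_middle_informative (y = x)); [subst; rewrite S_INR; lra|auto].
Qed.

Lemma vplus_vreset (u : X -> nat) (v : X -> R) (lam : clockset X) :
  vplus (nreset u lam) (vreset v lam) = vreset (vplus u v) lam.
Proof.
  apply functional_extensionality; intros y; unfold vplus, vreset, nreset.
  destruct (lam y); simpl; ring.
Qed.

Lemma rrun_app (q1 q2 q3 : rstate L X) (w1 w2 : list X) :
  rrun A q1 w1 q2 -> rrun A q2 w2 q3 -> rrun A q1 (w1 ++ w2) q3.
Proof.
  intros H1 H2; induction H1 as [q|q1 a q2' w q3' Hs Hr IH]; simpl; auto.
  replace ((match a with None => w | Some x => x :: w end) ++ w2)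
    with (match a with None => w ++ w2 | Some x => x :: (w ++ w2) end) by (destruct a; auto).
  eapply rrun_cons; eauto.
Qed.

Lemma clock_bound (f : X -> R) : exists B : nat, forall x, f x <= INR B.
Proof.
  assert (H : forall l : list X, exists B : nat, forall x, In x l -> f x <= INR B).
  { induction l as [|y l [B HB]]; [exists 0%nat; intros ? []|].
    destruct (INR_unbounded (f y)) as [n Hn].
    exists (Nat.max B n). intros x [<-|Hx].
    - apply Rle_trans with (INR n); [lra|apply le_INR; lia].
    - apply Rle_trans with (INR B); [auto|apply le_INR; lia]. }
  destruct (H lx) as [B HB]; exists B; auto.
Qed.

Lemma clock_argmax (x0 : X) (v : X -> R) : exists xm, forall y, v y <= v xm.
Proof.
  assert (H : forall l : list X, exists xm, forall y, In y (x0 :: l) -> v y <= v xm).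
  { induction l as [|y l [m Hm]]; [exists x0; intros ? [<-|[]]; lra|].
    destruct (Rle_dec (v y) (v m)).
    - exists m. intros z [E|[E|Hz]]; subst; auto; apply Hm; [left|right]; auto.
    - exists y. intros z [E|[E|Hz]]; subst.
      + specialize (Hm z (or_introl eq_refl)); lra.
      + lra.
      + specialize (Hm z (or_intror Hz)); lra. }
  destruct (H lx) as [m Hm]; exists m; intros y; apply Hm; right; auto.
Qed.

(** Termination measure for the simulation of a delay: the number of wraps
    still possible before the integral parts reach the bound [B]. *)
Definition wrap_budget (B : nat) (u : X -> nat) : nat := list_sum (map (fun y => B - u y)%nat lx).

Lemma wrap_budget_incr (B : nat) (u : X -> nat) (x : X) :
  (u x < B)%nat -> (wrap_budget B (incr u x) < wrap_budget B u)%nat.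
Proof.
  intros Hb. unfold wrap_budget.
  assert (H : forall l, (list_sum (map (fun y => B - incr u x y)%nat l)
                         <= list_sum (map (fun y => B - u y)%nat l))%nat /\
                        (In x l -> (list_sum (map (fun y => B - incr u x y)%nat l)
                                    < list_sum (map (fun y => B - u y)%nat l))%nat)).
  { induction l as [|y l [IH1 IH2]]; simpl; [split; [lia|intros []]|].
    unfold incr at 1 3. destruct (excluded_middle_informative (y = x)).
    - subst. split; lia.
    - split; [lia|intros [E|Hin]; [congruence|specialize (IH2 Hin); lia]]. }
  apply H, Hlx.
Qed.

Definition wrap_zone (Z : (X -> R) -> Prop) (x : X) : (X -> R) -> Prop :=
  zreset (fun v => Z v /\ v x = 1) (single x).
Definition edge_zone (u : X -> nat) (Z : (X -> R) -> Prop) (phi : guard X) (lam : clockset X) :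
  (X -> R) -> Prop :=
  zreset (fun v => Z v /\ gsat (vplus u v) phi) lam.

Lemma delay_step (l : L) (u : X -> nat) (Z : (X -> R) -> Prop) (g : clockset X)
    (nu : X -> R) (t : R) :
  unit_zone Z -> Z (frac u nu) -> 0 <= t -> in_unit_cube (frac u (vdelay nu t)) ->
  unit_zone (zfuture Z) /\ rstep A (mkR l u Z g) None (mkR l u (zfuture Z) g) /\
  zfuture Z (frac u (vdelay nu t)).
Proof.
  intros HZ Zv Ht Hc.
  assert (Hpt : zfuture Z (frac u (vdelay nu t))).
  { split; auto. exists (frac u nu), t. rewrite frac_vdelay; auto. }
  assert (HZf : unit_zone (zfuture Z)) by (apply (unit_zone_future lx Hlx); auto).
  split; [|split]; auto. apply r_delay, (unit_zone_zone1 _ HZf); eauto.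
Qed.

Lemma wrap_step (l : L) (u : X -> nat) (Z : (X -> R) -> Prop) (g : clockset X)
    (nu : X -> R) (x : X) :
  unit_zone Z -> Z (frac u nu) -> frac u nu x = 1 ->
  unit_zone (wrap_zone Z x) /\
  rstep A (mkR l u Z g) (if g x then None else Some x) (mkR l (incr u x) (wrap_zone Z x) g) /\
  wrap_zone Z x (frac (incr u x) nu).
Proof.
  intros HZ Zv Hx.
  assert (Hpt : wrap_zone Z x (frac (incr u x) nu)).
  { exists (frac u nu); split; [split; auto|].
    unfold frac in *. apply functional_extensionality; intros y.
    unfold vreset, single, incr.
    destruct (excluded_middle_informative (y = x)); [subst; rewrite S_INR; lra|ring]. }
  assert (HZw : unit_zone (wrap_zone Z x)).
  { apply (unit_zone_reset lx Hlx), unit_zone_inter; auto. apply (dc_definable_clock_eq x 1). }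
  split; [|split]; auto. apply r_wrap, (unit_zone_zone1 _ HZw); eauto.
Qed.

Lemma edge_step (l l' : L) (phi : guard X) (lam : clockset X) (u : X -> nat)
    (Z : (X -> R) -> Prop) (g g' : clockset X) (nu : X -> R) :
  In (l, phi, lam, l') (edges A) -> (forall x, g x = g' x || lam x) ->
  unit_zone Z -> Z (frac u nu) -> gsat nu phi ->
  unit_zone (edge_zone u Z phi lam) /\
  rstep A (mkR l u Z g) None (mkR l' (nreset u lam) (edge_zone u Z phi lam) g') /\
  edge_zone u Z phi lam (frac (nreset u lam) (vreset nu lam)).
Proof.
  intros Hin Hg HZ Zv Hphi.
  assert (Hpt : edge_zone u Z phi lam (frac (nreset u lam) (vreset nu lam))).
  { exists (frac u nu). split; [rewrite vplus_frac; auto|].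
    apply functional_extensionality; intros x; unfold frac, vreset, nreset.
    destruct (lam x); simpl; ring. }
  assert (HZe : unit_zone (edge_zone u Z phi lam)).
  { apply (unit_zone_reset lx Hlx), unit_zone_inter; auto. apply dc_definable_guard. }
  split; [|split]; auto. apply r_edge; auto. apply (unit_zone_zone1 _ HZe); eauto.
Qed.

(** A delay [d] of A is simulated by R(A): delay until the largest fractional
    part reaches [1], wrap that clock, and repeat; each wrap consumes budget
    [B], an integral bound on the clocks after the delay. *)
Lemma delay_sim (B : nat) : forall (n : nat) (l : L) (u : X -> nat) (Z : (X -> R) -> Prop)
    (g : clockset X) (nu : X -> R) (d : R),
  (wrap_budget B u < n)%nat -> unit_zone Z -> Z (frac u nu) -> 0 <= d ->
  (forall x, nu x + d <= INR B) ->
  exists w u' Z', unit_zone Z' /\ rrun A (mkR l u Z g) w (mkR l u' Z' g) /\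
                  Z' (frac u' (vdelay nu d)).
Proof.
  induction n as [|n IH]; intros l u Z g nu d Hn HZ Zv Hd HB; [lia|].
  assert (Hc : in_unit_cube (frac u nu)) by (apply HZ; auto).
  destruct (classic (forall x, frac u nu x + d <= 1)) as [Hsmall|Hlarge].
  - (* the whole delay fits before any clock reaches the next integer *)
    destruct (delay_step l u Z g nu d HZ Zv Hd) as [HZf [Hs Hpt]].
    { intros x. rewrite frac_vdelay. unfold vdelay. specialize (Hc x); specialize (Hsmall x).
      lra. }
    exists [], u, (zfuture Z). split; [|split]; auto.
    exact (rrun_cons Hs (rrun_nil _ _)).
  - apply not_all_ex_not in Hlarge as [x0 Hx0].
    destruct (clock_argmax x0 (frac u nu)) as [xm Hm].
    set (dl := 1 - frac u nu xm).
    assert (Hdl : 0 <= dl < d) by (unfold dl; specialize (Hm x0); specialize (Hc xm); lra).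
    destruct (delay_step l u Z g nu dl HZ Zv (proj1 Hdl)) as [HZf [Hs1 Hpt1]].
    { intros x. rewrite frac_vdelay. unfold vdelay, dl.
      pose proof (Hc x); pose proof (Hc xm); specialize (Hm x). lra. }
    assert (Hone : frac u (vdelay nu dl) xm = 1).
    { rewrite frac_vdelay. unfold vdelay, dl. ring. }
    destruct (wrap_step l u (zfuture Z) g _ xm HZf Hpt1 Hone) as [HZw [Hs2 Hpt2]].
    assert (Hbud : (u xm < B)%nat).
    { apply INR_lt. specialize (HB xm). unfold frac, vdelay in Hone. lra. }
    pose proof (wrap_budget_incr B u xm Hbud) as Hdec.
    destruct (IH l (incr u xm) (wrap_zone (zfuture Z) xm) g (vdelay nu dl) (d - dl))
      as [w [u' [Z' [HZ' [Hr HZ'v]]]]]; auto; [lia|lra|..].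
    { intros x. specialize (HB x). unfold vdelay. lra. }
    exists (match (if g xm then None else Some xm) with None => w | Some x => x :: w end), u', Z'.
    split; [|split]; auto.
    + exact (rrun_cons Hs1 (rrun_cons Hs2 Hr)).
    + replace (vdelay nu d) with (vdelay (vdelay nu dl) (d - dl)); auto.
      apply functional_extensionality; intros x; unfold vdelay; ring.
Qed.

Lemma run_forward (c1 c3 : L * (X -> R)) (rs : clockset X) :
  ta_run A c1 c3 rs ->
  forall u Z g, unit_zone Z -> Z (frac u (snd c1)) ->
  (forall x, rs x = true -> g x = true) ->
  exists w u' Z' g', unit_zone Z' /\ (forall x, g' x = g x && negb (rs x)) /\
    rrun A (mkR (fst c1) u Z g) w (mkR (fst c3) u' Z' g') /\
    Z' (frac u' (snd c3)).
Proof.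
  intros H. induction H as [c|c1 c2 c3 lab rs Hs Hr IH]; intros u Z g HZ Zv Hg.
  - exists [], u, Z, g. split; [|split; [|split]]; auto.
    + intros x; rewrite andb_true_r; auto.
    + apply rrun_nil.
  - inversion Hs as [l v d Hd E1 E2 E3|l phi lam l' v Hin Hphi E1 E2 E3]; subst; simpl in *.
    + destruct (clock_bound (vdelay v d)) as [B HB].
      destruct (delay_sim B (S (wrap_budget B u)) l u Z g v d) as [w1 [u1 [Z1 [HZ1 [Hr1 HZ1v]]]]];
        auto.
      destruct (IH u1 Z1 g HZ1) as [w2 [u2 [Z2 [g2 [HZ2 [Hg2 [Hr2 HZ2v]]]]]]]; auto.
      exists (w1 ++ w2), u2, Z2, g2. split; [|split; [|split]]; auto.
      eapply rrun_app; eauto.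
    + set (g1 := fun x => g x && (negb (lam x) || rs x)).
      assert (Hgg1 : forall x, g x = g1 x || lam x).
      { intros x. unfold g1. specialize (Hg x).
        destruct (g x), (lam x), (rs x); simpl in *; auto. }
      destruct (edge_step l l' phi lam u Z g g1 v Hin Hgg1 HZ Zv Hphi) as [HZ1 [Hs1 Hpt]].
      destruct (IH (nreset u lam) _ g1 HZ1 Hpt) as [w2 [u2 [Z2 [g2 [HZ2 [Hg2 [Hr2 HZ2v]]]]]]].
      { intros x Hx. unfold g1. rewrite Hg, Hx, orb_true_r by (rewrite Hx, orb_true_r; auto).
        auto. }
      exists w2, u2, Z2, g2. split; [|split; [|split]]; auto.
      * intros x. rewrite Hg2. unfold g1. destruct (g x), (lam x), (rs x); auto.
      * exact (rrun_cons Hs1 Hr2).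
Qed.

Lemma run_backward (q1 q3 : rstate L X) (w : list X) :
  rrun A q1 w q3 -> forall v3, rzone q3 v3 ->
  exists v1, rzone q1 v1 /\ exists rs,
    ta_run A (rloc q1, vplus (rint q1) v1) (rloc q3, vplus (rint q3) v3) rs /\
    forall x, rgam q1 x = rs x || rgam q3 x.
Proof.
  intros H. induction H as [q|q1 a q2 w q3 Hs Hr IH]; intros v3 H3.
  - exists v3; split; auto. exists (fun _ => false). split; [apply ta_run_nil|auto].
  - destruct (IH v3 H3) as [v2 [H2 [rs [Hrun Hg]]]]. clear IH.
    revert v2 H2 rs Hrun Hg. destruct Hs; simpl; intros v2 H2 rs Hrun Hg.
    + destruct H2 as [[v0 [t [Z0 [Ht ->]]]] _].
      exists v0; split; auto. eexists; split.
      * eapply ta_run_cons; [apply ta_delay; exact Ht|].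
        rewrite <- vplus_vdelay. exact Hrun.
      * simpl; auto.
    + destruct H2 as [v0 [[Z0 Hx] ->]].
      exists v0; split; auto. exists rs; split; auto.
      rewrite <- (vplus_wrap u v0 x Hx). exact Hrun.
    + destruct H2 as [v0 [[Z0 Hphi] ->]].
      exists v0; split; auto. eexists; split.
      * eapply ta_run_cons; [eapply ta_discrete; eauto|].
        rewrite <- vplus_vreset. exact Hrun.
      * simpl. intros x. rewrite H0, Hg. destruct (g' x), (lam x), (rs x), (rgam q3 x); auto.
Qed.

End Simulation.

Theorem proposition3 (L X : Type) (HL : finite_type L) (HX : finite_type X)
  (A : TA L X) (l0 l : L) (nu : X -> R) (Hnu : forall x, 0 <= nu x)
  (gamma : clockset X) :
  (exists rs : clockset X,
      ta_run A (l0, val0) (l, nu) rs /\ (forall x, rs x = gamma x))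
  <->
  (exists (w : list X) (u : X -> nat) (Z : (X -> R) -> Prop) (g : clockset X),
      zone1 Z /\ (forall x, g x = false) /\
      rrun A (mkR l0 (fun _ => 0%nat) (fun v => forall x, v x = 0) gamma) w
             (mkR l u Z g) /\
      Z (fun x => nu x - INR (u x))).
Proof.
  destruct HX as [lx Hlx]. split.
  -
    intros [rs [Hr Hrs]].
    destruct (run_forward lx Hlx A _ _ _ Hr (fun _ => 0%nat) (fun v => forall x, v x = 0) gamma)
      as [w [u [Z [g [HZ [Hg [Hr' HZv]]]]]]].
    + apply (unit_zone_zero lx Hlx).
    + intros x; unfold frac, val0; simpl; ring.
    + intros x Hx; rewrite <- Hrs; auto.
    + exists w, u, Z, g. split; [apply (unit_zone_zone1 _ HZ); eauto|].
      split; [intros x; rewrite Hg, Hrs; destruct (gamma x); auto|auto].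
  - (* backward: the run of A starts at [0 + 0] and ends at [u + (nu - u)] *)
    intros [w [u [Z [g [_ [Hg [Hr HZv]]]]]]].
    destruct (run_backward A _ _ _ Hr _ HZv) as [v1 [H1 [rs [Hrun Hgam]]]]; simpl in *.
    exists rs. split.
    + replace (@val0 X) with (vplus (fun _ => 0%nat) v1).
      2:{ apply functional_extensionality; intros x; unfold vplus, val0; rewrite H1; simpl; ring. }
      rewrite <- (vplus_frac u nu). exact Hrun.
    + intros x. rewrite Hgam, Hg. destruct (rs x); auto.
Qed.
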